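(* Let $\mathfrak{g}_{(1,0,0,1)}$ be the real Lie algebra with basis $e_1,\dots,e_6$ and nonzero brackets $[e_1,e_5]=e_2$, $[e_2,e_5]=-e_1$, $[e_3,e_6]=e_4$, $[e_4,e_6]=-e_3$. Every derivation $D$ of $\mathfrak{g}_{(1,0,0,1)}$ has the form $De_1=d_{11}e_1-d_{12}e_2$, $De_2=d_{12}e_1+d_{11}e_2$, $De_3=d_{33}e_3-d_{34}e_4$, $De_4=d_{34}e_3+d_{33}e_4$, $De_5=d_{15}e_1+d_{25}e_2$, $De_6=d_{36}e_3+d_{46}e_4$ with $d_{ij}\in\mathbb{R}$. Moreover, for $\eta>0$ and $\omega_\eta=e^{12}+e^{34}+\eta e^{56}$, any derivation $D$ for which there is $\lambda\in\mathfrak{g}_{(1,0,0,1)}^*$ with $\omega_{\eta,D,D}=-d\lambda$ is an inner derivation of $\mathfrak{g}_{(1,0,0,1)}$.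
   Context: $e^{ij}=e^i\wedge e^j$ in the dual basis. For a 2-form $\varphi$ and endomorphism $D$, $\varphi_D(x,y)=\varphi(Dx,y)+\varphi(x,Dy)$, and $\omega_{\eta,D,D}=((\omega_\eta)_D)_D$. $d\lambda(x,y)=-\lambda([x,y])$. An inner derivation is one of the form $\mathrm{ad}_x$. *)

From mathcomp Require Import all_boot all_order all_algebra.
From mathcomp Require Import reals.
Set Implicit Arguments. Unset Strict Implicit. Unset Printing Implicit Defensive.
Import Order.TTheory GRing.Theory Num.Theory.
Local Open Scope ring_scope.

(* The underlying vector space R^6 is 'rV[R]_6; basis vector e_(k+1) is
   (ebas k) for k : 'I_6 (0-based indices: e1 = ebas 0, ..., e6 = ebas 5). *)
Definition ebas (R : realType) (k : 'I_6) : 'rV[R]_6 := delta_mx 0 k.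

Definition sconst (R : realType) (i j : 'I_6) : 'rV[R]_6 :=
  match nat_of_ord i, nat_of_ord j with
  | 0, 4 => ebas R (inord 1)
  | 4, 0 => - ebas R (inord 1)
  | 1, 4 => - ebas R (inord 0)
  | 4, 1 => ebas R (inord 0)
  | 2, 5 => ebas R (inord 3)
  | 5, 2 => - ebas R (inord 3)
  | 3, 5 => - ebas R (inord 2)
  | 5, 3 => ebas R (inord 2)
  | _, _ => 0
  end.

Definition lbr (R : realType) (x y : 'rV[R]_6) : 'rV[R]_6 :=
  \sum_(i < 6) \sum_(j < 6) (x 0 i * y 0 j) *: sconst R i j.

(* Endomorphisms are matrices acting on row vectors: D x := x *m D. *)
Definition is_derivation (R : realType) (D : 'M[R]_6) : Prop :=
  forall x y : 'rV[R]_6, lbr x y *m D = lbr (x *m D) y + lbr x (y *m D).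

Definition is_inner (R : realType) (D : 'M[R]_6) : Prop :=
  exists z : 'rV[R]_6, forall y : 'rV[R]_6, y *m D = lbr z y.

Definition form2 (R : realType) := 'rV[R]_6 -> 'rV[R]_6 -> R.

Definition ewedge (R : realType) (i j : 'I_6) : form2 R :=
  fun x y => x 0 i * y 0 j - x 0 j * y 0 i.

Definition omega_eta (R : realType) (eta : R) : form2 R :=
  fun x y => ewedge (inord 0) (inord 1) x y + ewedge (inord 2) (inord 3) x y
             + eta * ewedge (inord 4) (inord 5) x y.

Definition form_act (R : realType) (phi : form2 R) (D : 'M[R]_6) : form2 R :=
  fun x y => phi (x *m D) y + phi x (y *m D).

Definition lfun (R : realType) (l : 'cV[R]_6) (x : 'rV[R]_6) : R := (x *m l) 0 0.

Definition dlam (R : realType) (l : 'cV[R]_6) : form2 R :=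
  fun x y => - lfun l (lbr x y).

(* g_(1,0,0,1) is the direct sum of two copies of e(2): ad e5 rotates the abelian
   ideal <e1, e2> and ad e6 rotates <e3, e4>.  The derivation identity on the
   brackets of one such block forces D to act on its ideal as a rotation-dilation
   d11 + d12 J and to kill the e5-component of D e5; on the commuting pairs
   across the two blocks it kills the mixed entries.  Conversely, on an abelian
   plane (u, v) on which D acts as a + b J, every skew form satisfies
   phi_D(u, v) = 2a phi(u, v), so omega_(eta,D,D)(u, v) = 4a^2 omega_eta(u, v)
   while d lambda(u, v) = - lambda([u, v]) = 0.  Exactness thus forces
   d11 = d33 = 0, and a derivation of the resulting shape is ad z for an
   explicit z. *)

From mathcomp Require Import all_boot all_order all_algebra.
From mathcomp Require Import reals ring lra.
Set Implicit Arguments. Unset Strict Implicit. Unset Printing Implicit Defensive.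
Import Order.TTheory GRing.Theory Num.Theory.
Local Open Scope ring_scope.

Section G1001.
Variable R : realType.
Implicit Types (x y u v : 'rV[R]_6) (D : 'M[R]_6).
Local Notation e := (ebas R).
Local Notation e_ k := (ebas R (@inord 5 k%N)).
Local Notation "x `_( k )" := (x 0 (@inord 5 k%N)) (at level 3, format "x `_( k )").
Local Notation "A `_( a , b )" := (A (@inord 5 a%N) (@inord 5 b%N))
  (at level 3, format "A `_( a ,  b )").

Lemma ebas_coord i j : e i 0 j = (i == j)%:R.
Proof. by rewrite mxE eqxx eq_sym. Qed.

Lemma inord6_eq a c : (a < 6)%N -> (c < 6)%N -> (@inord 5 a == inord c) = (a == c).
Proof. by move=> ha hc; rewrite -val_eqE /= !inordK. Qed.

Lemma row6P u v : (forall c, (c < 6)%N -> u`_(c) = v`_(c)) -> u = v.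
Proof. by move=> uv; apply/rowP => k; rewrite -(inord_val k) uv. Qed.

Lemma sum6 (V : nmodType) (F : 'I_6 -> V) : \sum_(i < 6) F i =
  F (inord 0) + F (inord 1) + F (inord 2) + F (inord 3) + F (inord 4) + F (inord 5).
Proof.
rewrite !big_ord_recl big_ord0 addr0 !addrA.
by repeat congr (_ + _); congr F; apply/val_inj; rewrite /= inordK.
Qed.

Lemma lbrE x y : lbr x y = \row_c
  [:: x`_(4) * y`_(1) - x`_(1) * y`_(4); x`_(0) * y`_(4) - x`_(4) * y`_(0);
      x`_(5) * y`_(3) - x`_(3) * y`_(5); x`_(2) * y`_(5) - x`_(5) * y`_(2); 0; 0]`_c.
Proof.
apply: row6P => -[|[|[|[|[|[|c]]]]]] // _.
all: rewrite /lbr summxE sum6 !summxE !sum6 /sconst !inordK //= !mxE !inordK //.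
all: rewrite !eqxx !inord6_eq //=; ring.
Qed.

Lemma ebas_mulmx i D j : (e i *m D) 0 j = D i j.
Proof. by rewrite -rowE mxE. Qed.

(* ad e_k rotates the plane <e_i, e_j>, which is an abelian ideal of the
   subalgebra <e_i, e_j, e_k>, a copy of e(2). *)
Definition rotation_block (i j k : 'I_6) : Prop :=
  [/\ forall x, lbr x (e k) = x 0 i *: e j - x 0 j *: e i,
      forall y, lbr (e i) y = y 0 k *: e j,
      forall y, lbr (e j) y = - (y 0 k *: e i)
    & forall y, lbr (e k) y = y 0 j *: e i - y 0 i *: e j].

Lemma rotation_block_neq i j k : rotation_block i j k -> i != j.
Proof.
case=> _ lbr_i lbr_j _; apply/eqP => eq_ij; subst j.
have := lbr_i (e k); rewrite lbr_j => /rowP/(_ i).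
rewrite !mxE !eqxx /=; lra.
Qed.

Section RotationBlock.
Variables (i j k : 'I_6) (D : 'M[R]_6).
Hypotheses (blk : rotation_block i j k) (HD : is_derivation D).

Lemma derivation_block_row_i : e i *m D = (D j j + D k k) *: e i - D j i *: e j.
Proof.
case: blk => lbr_k _ lbr_j _.
have := HD (e j) (e k).
rewrite lbr_j lbr_k lbr_j ebas_coord eqxx scale1r mulNmx !ebas_mulmx => Hi.
rewrite -[LHS]opprK Hi; apply/rowP => c; rewrite !mxE; ring.
Qed.

Lemma derivation_block_row_j : e j *m D = - D i j *: e i + (D i i + D k k) *: e j.
Proof.
case: blk => lbr_k lbr_i _ _.
have := HD (e i) (e k).
rewrite lbr_i lbr_k lbr_i ebas_coord eqxx scale1r !ebas_mulmx => ->.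
apply/rowP => c; rewrite !mxE; ring.
Qed.

Lemma derivation_rotation_block :
  [/\ D k k = 0, e i *m D = D i i *: e i - D j i *: e j
    & e j *m D = D j i *: e i + D i i *: e j].
Proof.
have neq_ij := rotation_block_neq blk.
have rowi := derivation_block_row_i; have rowj := derivation_block_row_j.
have := congr1 (fun v => v 0 i) rowi; have := congr1 (fun v => v 0 j) rowi.
have := congr1 (fun v => v 0 j) rowj.
rewrite /= !ebas_mulmx !mxE !eqxx [j == i]eq_sym (negPf neq_ij) /=.
rewrite !(mulr1, mulr0, add0r, subr0, sub0r).
move=> hjj hij hii.
have Dkk : D k k = 0 by lra.
split=> //; first by rewrite rowi -hii.
by rewrite rowj Dkk addr0 hij opprK.
Qed.
End RotationBlock.

Ltac simpl_coords := rewrite ?lbrE ?ebas_mulmx !mxE ?inordK //= ?inord6_eq //=.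

Ltac by_coords := apply: row6P => -[|[|[|[|[|[|c]]]]]] // _; simpl_coords; ring.

Lemma rotation_block014 : rotation_block (inord 0) (inord 1) (inord 4).
Proof. by split=> x; by_coords. Qed.

Lemma rotation_block235 : rotation_block (inord 2) (inord 3) (inord 5).
Proof. by split=> x; by_coords. Qed.

Lemma lbr_ebas_commuting :
  [/\ lbr (e_ 0) (e_ 1) = 0, lbr (e_ 2) (e_ 3) = 0, lbr (e_ 4) (e_ 5) = 0,
      lbr (e_ 2) (e_ 4) = 0 & lbr (e_ 0) (e_ 5) = 0].
Proof. by split; by_coords. Qed.

Section Derivation.
Variable D : 'M[R]_6.
Hypothesis HD : is_derivation D.

Lemma derivation_commuting u v :
  lbr u v = 0 -> lbr (u *m D) v + lbr u (v *m D) = 0.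
Proof. by move=> uv; rewrite -HD uv mul0mx. Qed.

Lemma derivation_row4 : e_ 4 *m D = D`_(4, 0) *: e_ 0 + D`_(4, 1) *: e_ 1.
Proof.
have [D44 _ _] := derivation_rotation_block rotation_block014 HD.
have [_ _ c45 c35 _] := lbr_ebas_commuting.
move: (derivation_commuting c45) (derivation_commuting c35) => /rowP H56 /rowP H35.
move: (H56 (inord 2)) (H56 (inord 3)) (H35 (inord 3)); simpl_coords => D43 D42 D45.
apply: row6P => -[|[|[|[|[|[|c]]]]]] // _; simpl_coords; lra.
Qed.

Lemma derivation_row5 : e_ 5 *m D = D`_(5, 2) *: e_ 2 + D`_(5, 3) *: e_ 3.
Proof.
have [D55 _ _] := derivation_rotation_block rotation_block235 HD.
have [_ _ c45 _ c05] := lbr_ebas_commuting.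
move: (derivation_commuting c45) (derivation_commuting c05) => /rowP H56 /rowP H15.
move: (H56 (inord 0)) (H56 (inord 1)) (H15 (inord 1)); simpl_coords => D51 D50 D54.
apply: row6P => -[|[|[|[|[|[|c]]]]]] // _; simpl_coords; lra.
Qed.

Definition derivation_form D (d11 d12 d33 d34 d15 d25 d36 d46 : R) : Prop :=
  e_ 0 *m D = d11 *: e_ 0 - d12 *: e_ 1 /\ e_ 1 *m D = d12 *: e_ 0 + d11 *: e_ 1 /\
  e_ 2 *m D = d33 *: e_ 2 - d34 *: e_ 3 /\ e_ 3 *m D = d34 *: e_ 2 + d33 *: e_ 3 /\
  e_ 4 *m D = d15 *: e_ 0 + d25 *: e_ 1 /\ e_ 5 *m D = d36 *: e_ 2 + d46 *: e_ 3.

Lemma derivation_formP : exists d11 d12 d33 d34 d15 d25 d36 d46,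
  derivation_form D d11 d12 d33 d34 d15 d25 d36 d46.
Proof.
have [_ r0 r1] := derivation_rotation_block rotation_block014 HD.
have [_ r2 r3] := derivation_rotation_block rotation_block235 HD.
have r4 := derivation_row4; have r5 := derivation_row5.
by exists D`_(0, 0), D`_(1, 0), D`_(2, 2), D`_(3, 2),
  D`_(4, 0), D`_(4, 1), D`_(5, 2), D`_(5, 3).
Qed.

End Derivation.

Lemma derivation_form_inner D d12 d34 d15 d25 d36 d46 :
  derivation_form D 0 d12 0 d34 d15 d25 d36 d46 -> is_inner D.
Proof.
case=> r0 [r1 [r2 [r3 [r4 r5]]]].
exists (d25 *: e_ 0 - d15 *: e_ 1 + d46 *: e_ 2 - d36 *: e_ 3
        + d12 *: e_ 4 + d34 *: e_ 5) => y.
rewrite mulmx_sum_row sum6 !rowE r0 r1 r2 r3 r4 r5.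
apply: row6P => -[|[|[|[|[|[|c]]]]]] // _; simpl_coords; ring.
Qed.

Definition skew_form (phi : form2 R) : Prop :=
  [/\ forall x y z, phi (x + y) z = phi x z + phi y z,
      forall a x y, phi (a *: x) y = a * phi x y
    & forall x y, phi y x = - phi x y].

Lemma skew_form_act phi D : skew_form phi -> skew_form (form_act phi D).
Proof.
case=> phiD phiZ phiN; split=> [x y z | a x y | x y]; rewrite /form_act.
- by rewrite mulmxDl !phiD addrACA.
- by rewrite -scalemxAl !phiZ mulrDr.
- by rewrite (phiN x) (phiN (x *m D)) opprD addrC.
Qed.

Lemma skew_formxx phi x : skew_form phi -> phi x x = 0.
Proof. by case=> _ _ phiN; have := phiN x x; lra. Qed.

Lemma form_act_rotation phi D u v a b : skew_form phi ->
  u *m D = a *: u - b *: v -> v *m D = b *: u + a *: v ->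
  form_act phi D u v = 2 * a * phi u v.
Proof.
move=> skew uD vD; have [phiD phiZ phiN] := skew.
rewrite /form_act uD vD (phiN _ u) -scaleNr !phiD !phiZ !skew_formxx // (phiN u v); ring.
Qed.

Lemma dilation_eq0_of_exact_form_act2 phi D u v a b l : skew_form phi -> phi u v != 0 ->
  lbr u v = 0 -> u *m D = a *: u - b *: v -> v *m D = b *: u + a *: v ->
  (forall x y, form_act (form_act phi D) D x y = - dlam l x y) -> a = 0.
Proof.
move=> skew phi_uv uv uD vD exact.
have := exact u v.
rewrite (form_act_rotation (skew_form_act D skew) uD vD) (form_act_rotation skew uD vD).
rewrite /dlam /lfun uv mul0mx mxE !oppr0 => /eqP.
by rewrite !mulf_eq0 (negPf phi_uv) pnatr_eq0 /= orbF orbb => /eqP.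
Qed.

Lemma skew_omega_eta eta : skew_form (omega_eta eta).
Proof. by split=> *; rewrite /omega_eta /ewedge ?mxE; ring. Qed.

Lemma omega_eta_planes_neq0 eta :
  omega_eta eta (e_ 0) (e_ 1) != 0 /\ omega_eta eta (e_ 2) (e_ 3) != 0.
Proof. by split; apply/eqP; rewrite /omega_eta /ewedge; simpl_coords; lra. Qed.

End G1001.

Theorem lemma4p8 (R : realType) :
  (forall D : 'M[R]_6, is_derivation D ->
     exists d11 d12 d33 d34 d15 d25 d36 d46 : R,
       ebas R (inord 0) *m D = d11 *: ebas R (inord 0) - d12 *: ebas R (inord 1) /\
           ebas R (inord 1) *m D = d12 *: ebas R (inord 0) + d11 *: ebas R (inord 1) /\
           ebas R (inord 2) *m D = d33 *: ebas R (inord 2) - d34 *: ebas R (inord 3) /\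
           ebas R (inord 3) *m D = d34 *: ebas R (inord 2) + d33 *: ebas R (inord 3) /\
           ebas R (inord 4) *m D = d15 *: ebas R (inord 0) + d25 *: ebas R (inord 1) /\
           ebas R (inord 5) *m D = d36 *: ebas R (inord 2) + d46 *: ebas R (inord 3))
  /\
  (forall eta : R, 0 < eta ->
     forall D : 'M[R]_6, is_derivation D ->
       (exists l : 'cV[R]_6, forall x y : 'rV[R]_6,
          form_act (form_act (omega_eta eta) D) D x y = - dlam l x y) ->
       is_inner D).
Proof.
split=> [D HD | eta _ D HD [l exact_l]]; first exact: derivation_formP.
have [d11 [d12 [d33 [d34 [d15 [d25 [d36 [d46 Dform]]]]]]]] := derivation_formP HD.
have [r0 [r1 [r2 [r3 _]]]] := Dform.
have [c01 c23 _ _ _] := lbr_ebas_commuting R.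
have [omega01 omega23] := omega_eta_planes_neq0 eta.
have d11_0 := dilation_eq0_of_exact_form_act2 (skew_omega_eta eta) omega01 c01 r0 r1 exact_l.
have d33_0 := dilation_eq0_of_exact_form_act2 (skew_omega_eta eta) omega23 c23 r2 r3 exact_l.
by rewrite d11_0 d33_0 in Dform; exact: derivation_form_inner Dform.
Qed.
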